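(* Let $S\in\mathsf{Stab}(n,k)$, $E\in\bar{\mathcal{P}}_n$ and $x\in\{0,1\}^k$ be fixed. For any $n$-qubit Clifford $U$, the state $U E\ket{\overline{\psi_x}}^S$ equals $(UEU^\dagger)\,U\ket{\overline{\psi_x}}^S$, i.e. the encoding of $x$ under the stabilizer code $USU^\dagger$ (with encoding circuit $U U^S_{\mathrm{Enc}}$) acted upon by the error $UEU^\dagger$. Moreover, suppose $E$ has weight $w=O(\log^c n)$ for some integer $c>0$. Then for $U\sim\mathsf{PLC}_n$ uniform, the joint distribution of $(UEU^\dagger,USU^\dagger)$ is within total variation distance at most $1-1/O(n^{\log^c n})$ of the product distribution $\mathcal{U}_w\times\mathrm{Unif}(\{VSV^\dagger\}_{V\in\mathsf{PLC}_n})$.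
   Context: $\bar{\mathcal{P}}_n$ is the set of unsigned $n$-qubit Pauli operators; the weight of a Pauli is its number of non-identity tensor factors; $\mathcal{U}_w$ is the uniform distribution over the unsigned $n$-qubit Paulis of weight exactly $w$. $\mathsf{Stab}(n,k)$ is the set of stabilizer subgroups of the $n$-qubit Pauli group with $n-k$ independent commuting generators (not containing $-I$); $U^S_{\mathrm{Enc}}$ is a Clifford encoding circuit for $S$ and $\ket{\overline{\psi_x}}^S=U^S_{\mathrm{Enc}}(\ket{0^{n-k}}\otimes\ket{x})$. $\mathsf{PLC}_n$ is the group (modulo global phase) of $n$-qubit Cliffords of the form $(C_1\otimes\cdots\otimes C_n)\,\mathcal{Q}(\pi)$ with $C_i$ single-qubit Cliffords and $\mathcal{Q}(\pi)$ the operator permuting the $n$ qubits according to $\pi\in\mathfrak{S}_n$; $U\sim\mathsf{PLC}_n$ denotes the uniform distribution on this finite group. *)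

From HB Require Import structures.
From mathcomp Require Import all_boot all_order all_algebra all_fingroup all_field.
From mathcomp Require Import boolp reals exp.
Set Implicit Arguments. Unset Strict Implicit. Unset Printing Implicit Defensive.
Import Order.TTheory GRing.Theory Num.Theory.
Local Open Scope ring_scope.

Definition qbit (n : nat) (j : 'I_n) (i : 'I_(2 ^ n)) : bool := odd (i %/ 2 ^ j).
Definition b2o (b : bool) : 'I_2 := inord (nat_of_bool b).

Definition tens (n : nat) (C : 'I_n -> 'M[algC]_2) : 'M[algC]_(2 ^ n) :=
  \matrix_(i, i') \prod_(j < n) C j (b2o (qbit j i)) (b2o (qbit j i')).

(* qubit permutation operator Q(pi): sends qubit j to qubit pi j *)
Definition Qperm (n : nat) (pi : 'S_n) : 'M[algC]_(2 ^ n) :=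
  \matrix_(i, i') (([forall j, qbit (pi j) i == qbit j i'] : bool)%:R).

Definition ket (n : nat) (b : {ffun 'I_n -> bool}) : 'cV[algC]_(2 ^ n) :=
  \col_i (([forall j, qbit j i == b j] : bool)%:R).

Definition adj (m : nat) (U : 'M[algC]_m) : 'M[algC]_m := (map_mx (fun z : algC => z^*) U)^T.
Definition unitary (m : nat) (U : 'M[algC]_m) : Prop := U *m adj U = 1%:M.

(* 0 = I, 1 = X, 2 = Y, 3 = Z *)
Definition pauli1 (a : 'I_4) : 'M[algC]_2 :=
  \matrix_(r, s)
   (if val a == 0%N then (if r == s then 1 else 0)
    else if val a == 1%N then (if r != s then 1 else 0)
    else if val a == 2%N then
      (if r == s then 0 else if val r == 0%N then - 'i else 'i)
    else (if r == s then (if val r == 0%N then 1 else -1) else 0)).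

Definition upauli (n : nat) := {ffun 'I_n -> 'I_4}.
(* elements i^a P of the n-qubit Pauli group *)
Definition spauli (n : nat) := ('I_4 * upauli n)%type.

Definition pmat (n : nat) (p : upauli n) : 'M[algC]_(2 ^ n) :=
  tens (fun j => pauli1 (p j)).
Definition smat (n : nat) (s : spauli n) : 'M[algC]_(2 ^ n) :=
  ('i ^+ s.1) *: pmat s.2.

Definition weight (n : nat) (p : upauli n) : nat := #|[set j | p j != 0]|.

Definition is_clifford (n : nat) (U : 'M[algC]_(2 ^ n)) : Prop :=
  unitary U /\ forall s : spauli n, exists t : spauli n,
      smat t = U *m smat s *m adj U.

Definition conj_sp (n : nat) (U : 'M[algC]_(2 ^ n)) (s : spauli n) : spauli n :=
  odflt s [pick t | smat t == U *m smat s *m adj U].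

Definition conj_set (n : nat) (U : 'M[algC]_(2 ^ n)) (S : {set spauli n}) :
  {set spauli n} := [set conj_sp U s | s in S].

(* an n-qubit Clifford modulo global phase, represented by its (faithful)
   conjugation action on the Pauli group *)
Definition cact (n : nat) (U : 'M[algC]_(2 ^ n)) : {ffun spauli n -> spauli n} :=
  [ffun s => conj_sp U s].

Definition is_PLC (n : nat) (U : 'M[algC]_(2 ^ n)) : Prop :=
  exists (C : 'I_n -> 'M[algC]_(2 ^ 1)) (pi : 'S_n),
    (forall j, is_clifford (C j)) /\ U = tens C *m Qperm pi.

Definition PLC (n : nat) : {set {ffun spauli n -> spauli n}} :=
  [set f | `[< exists U, is_PLC U /\ cact U = f >] ].

Definition gprod (n m : nat) (g : 'I_m -> spauli n) (l : seq 'I_m) :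
  'M[algC]_(2 ^ n) := foldr (fun i A => smat (g i) *m A) 1%:M l.

Definition in_gen (n m : nat) (g : 'I_m -> spauli n) (s : spauli n) : Prop :=
  exists l : seq 'I_m, smat s = gprod g l.

Definition minusI (n : nat) : spauli n := (inord 2, [ffun => 0]).

Definition Stab (n k : nat) (S : {set spauli n}) : Prop :=
  (k <= n)%N /\
  (forall s t, s \in S -> t \in S -> smat s *m smat t = smat t *m smat s) /\
  minusI n \notin S /\
  exists g : 'I_(n - k) -> spauli n,
    (forall s, s \in S <-> in_gen g s) /\
    (forall i, ~ exists l : seq 'I_(n - k),
        all (fun j => j != i) l /\ smat (g i) = gprod g l).

Definition Zq (n : nat) (j : nat) : spauli n :=
  (0, [ffun i : 'I_n => if val i == j then inord 3 else 0]).

(* U is a Clifford encoding circuit for S (ancillas = first n-k qubits):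
   S is generated by U Z_j U^dagger, j < n-k *)
Definition is_encoder (n k : nat) (S : {set spauli n}) (U : 'M[algC]_(2 ^ n)) : Prop :=
  is_clifford U /\
  forall s, s \in S <-> in_gen (fun j : 'I_(n - k) => conj_sp U (Zq n j)) s.

(* |0^{n-k}> (x) |x> *)
Definition anc_ket (n k : nat) (x : {ffun 'I_k -> bool}) : 'cV[algC]_(2 ^ n) :=
  ket [ffun j : 'I_n => if (j < n - k)%N then false
                        else if [pick i : 'I_k | val i == (j - (n - k))%N] is Some i
                        then x i else false].

Definition enc_state (n k : nat) (U : 'M[algC]_(2 ^ n)) (x : {ffun 'I_k -> bool}) :
  'cV[algC]_(2 ^ n) := U *m @anc_ket n k x.

Section Dist.
Variable R : realType.

(* joint law of (U E U^dagger (unsigned), U S U^dagger), U ~ PLC_n *)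
Definition joint_law (n : nat) (S : {set spauli n}) (E : upauli n)
  (z : upauli n * {set spauli n}) : R :=
  #|[set f in PLC n | ((f (0, E)).2, f @: S) == z]|%:R / #|PLC n|%:R.

Definition unif_w (n w : nat) (e : upauli n) : R :=
  if weight e == w then 1 / #|[set p : upauli n | weight p == w]|%:R else 0.

Definition code_orbit (n : nat) (S : {set spauli n}) : {set {set spauli n}} :=
  [set f @: S | f : {ffun spauli n -> spauli n} in PLC n].
Definition unif_orbit (n : nat) (S : {set spauli n}) (T : {set spauli n}) : R :=
  if T \in code_orbit S then 1 / #|code_orbit S|%:R else 0.

Definition tv_dist (T : finType) (p q : T -> R) : R :=
  2^-1 * \sum_(z : T) `|p z - q z|.

Definition tv_joint_product (n w : nat) (S : {set spauli n}) (E : upauli n) : R :=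
  tv_dist (joint_law S E) (fun z => unif_w w z.1 * unif_orbit S z.2).
End Dist.
Arguments Stab : clear implicits.
Arguments is_encoder {n} k S U.
Arguments tv_joint_product R {n} w S E.

(* Conjugation by a Clifford U acts injectively on the Pauli group, since Paulis are
   orthogonal for the trace form; hence it carries the generators, the commutation, the
   independence and the absence of -I from S over to U S U^dagger, with encoder U U_Enc.
   A tensor product of single-qubit Cliffords followed by a qubit permutation maps a Pauli
   of weight w to a Pauli of weight w.  For U uniform in PLC_n, all fibres of
   U |-> U S U^dagger above the orbit of S have the same size, so U S U^dagger is uniform
   on that orbit while U E U^dagger has weight w.  The joint law and U_w x Unif(orbit)
   therefore overlap in mass at least 1 / N_w, where N_w <= C(n,w) 3^w <= 6 n^w counts
   the Paulis of weight w, and n^w <= n^(A log^c n). *)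

From HB Require Import structures.
From mathcomp Require Import all_boot all_order all_algebra all_fingroup all_field.
From mathcomp Require Import boolp reals exp lra.
Set Implicit Arguments. Unset Strict Implicit. Unset Printing Implicit Defensive.
Import Order.TTheory GRing.Theory Num.Theory.
Local Open Scope ring_scope.

(** * Computational basis, tensor products and qubit permutations *)

Lemma nat_bits_inj (n a b : nat) : (a < 2 ^ n)%N -> (b < 2 ^ n)%N ->
  (forall j, (j < n)%N -> odd (a %/ 2 ^ j) = odd (b %/ 2 ^ j)) -> a = b.
Proof.
elim: n a b => [|n IHn] a b; first by rewrite expn0 !ltnS !leqn0 => /eqP-> /eqP->.
move=> ltan ltbn eq_bits.
have eq_half : a./2 = b./2.
  apply: IHn; rewrite -?divn2 ?ltn_divLR -?expnSr //.
  by move=> j ltjn; rewrite -!divnMA -expnS; exact: eq_bits.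
have := eq_bits 0%N isT; rewrite expn0 !divn1 => eq_odd.
by rewrite -[a]odd_double_half -[b]odd_double_half eq_half eq_odd.
Qed.

Definition bits (n : nat) (i : 'I_(2 ^ n)) : {ffun 'I_n -> 'I_2} :=
  [ffun j => b2o (qbit j i)].

Lemma b2oE (b : bool) : b2o b = b :> nat.
Proof. by rewrite inordK //; case: b. Qed.

Lemma b2o_inj : injective b2o.
Proof. by move=> b b' /(congr1 val); rewrite /= !b2oE; case: b; case: b'. Qed.

Lemma b2o_odd (i : 'I_2) : b2o (odd i) = i.
Proof. by apply: val_inj; rewrite /= b2oE; case: i => [[|[|]]]. Qed.

Lemma bits_inj n : injective (@bits n).
Proof.
move=> i i' /ffunP eq_bits; apply/val_inj/(@nat_bits_inj n); rewrite ?ltn_ord // => j ltjn.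
by have := eq_bits (Ordinal ltjn); rewrite !ffunE => /b2o_inj.
Qed.

Lemma bits_bij n : bijective (@bits n).
Proof. by apply: inj_card_bij; [exact: bits_inj | rewrite card_ffun !card_ord]. Qed.

Definition of_bits (n : nat) (b : {ffun 'I_n -> 'I_2}) : 'I_(2 ^ n) :=
  odflt (Ordinal (expn_gt0 2 n)) [pick i | bits i == b].

Lemma bitsK n : cancel (@bits n) (@of_bits n).
Proof.
move=> i; rewrite /of_bits; case: pickP => [i' /eqP/bits_inj // | /(_ i)].
by rewrite eqxx.
Qed.

Lemma of_bitsK n : cancel (@of_bits n) (@bits n).
Proof. by move=> b; have [g _ gK] := bits_bij n; rewrite -[b]gK bitsK. Qed.

Lemma sum_bits n (F : 'I_(2 ^ n) -> algC) :
  \sum_i F i = \sum_(b : {ffun 'I_n -> 'I_2}) F (of_bits b).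
Proof.
by rewrite (reindex (@of_bits n)) //; exists (@bits n) => b _; rewrite ?of_bitsK ?bitsK.
Qed.

Lemma tensE n (C : 'I_n -> 'M[algC]_2) i i' :
  tens C i i' = \prod_j C j (bits i j) (bits i' j).
Proof. by rewrite mxE; apply: eq_bigr => j _; rewrite !ffunE. Qed.

Lemma tens_ord1 (C : 'I_1 -> 'M[algC]_2) : tens C = C ord0.
Proof.
apply/matrixP => i i'; rewrite tensE big_ord1 !ffunE /qbit /= !expn0 !divn1.
by rewrite !b2o_odd.
Qed.

Lemma tens_scalar1 n : tens (fun _ : 'I_n => (1%:M : 'M[algC]_2)) = 1%:M.
Proof.
apply/matrixP => i i'; rewrite tensE [RHS]mxE.
have [<-|neq_ii'] := eqVneq i i'; first by rewrite big1 // => j _; rewrite mxE eqxx.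
have [j neq_j] : exists j, bits i j != bits i' j.
  apply/existsP; apply: contraR neq_ii' => /existsPn eq_bits.
  by apply/eqP/bits_inj/ffunP => j; apply/eqP; rewrite -[_ == _]negbK eq_bits.
by rewrite (bigD1 j) //= mxE (negbTE neq_j) mul0r.
Qed.

Lemma tensZ n (a : 'I_n -> algC) (C : 'I_n -> 'M[algC]_2) :
  tens (fun j => a j *: C j) = (\prod_j a j) *: tens C.
Proof.
apply/matrixP => i i'; rewrite [RHS]mxE !tensE -big_split /=.
by apply: eq_bigr => j _; rewrite mxE.
Qed.

Lemma tens_mul n (A B : 'I_n -> 'M[algC]_2) :
  tens A *m tens B = tens (fun j => A j *m B j).
Proof.
apply/matrixP => i i'; rewrite [LHS]mxE [RHS]tensE sum_bits.
under [RHS]eq_bigr => j _ do rewrite mxE.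
rewrite bigA_distr_bigA /=; apply: eq_bigr => b _.
by rewrite !tensE of_bitsK -big_split.
Qed.

Lemma mxtrace_tens n (C : 'I_n -> 'M[algC]_2) :
  \tr (tens C) = \prod_j \tr (C j).
Proof.
rewrite /mxtrace sum_bits bigA_distr_bigA; apply: eq_bigr => b _.
by rewrite tensE of_bitsK.
Qed.

Definition qidx n (pi : 'S_n) (i : 'I_(2 ^ n)) : 'I_(2 ^ n) :=
  of_bits [ffun j => bits i (pi j)].

Lemma bits_qidx n (pi : 'S_n) i j : bits (qidx pi i) j = bits i (pi j).
Proof. by rewrite of_bitsK ffunE. Qed.

Lemma qidxK n (pi : 'S_n) : cancel (qidx pi) (qidx pi^-1).
Proof. by move=> i; apply/bits_inj/ffunP => j; rewrite !bits_qidx permKV. Qed.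

Lemma qidxKV n (pi : 'S_n) : cancel (qidx pi^-1) (qidx pi).
Proof. by move=> i; apply/bits_inj/ffunP => j; rewrite !bits_qidx permK. Qed.

Lemma qidxM n (pi rho : 'S_n) i : qidx rho (qidx pi i) = qidx (rho * pi) i.
Proof. by apply/bits_inj/ffunP => j; rewrite !bits_qidx permM. Qed.

Lemma qidx1 n i : qidx (1 : 'S_n) i = i.
Proof. by apply/bits_inj/ffunP => j; rewrite bits_qidx perm1. Qed.

Lemma QpermE n (pi : 'S_n) i i' : Qperm pi i i' = (i' == qidx pi i)%:R.
Proof.
rewrite mxE; congr (nat_of_bool _)%:R; apply/forallP/eqP => [eq_bits | -> j].
  by apply/bits_inj/ffunP => j; rewrite bits_qidx !ffunE (eqP (eq_bits j)).
by have := bits_qidx pi i j; rewrite !ffunE => /b2o_inj ->.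
Qed.

Lemma mul_Qperm_mx n (pi : 'S_n) (M : 'M[algC]_(2 ^ n)) i i' :
  (Qperm pi *m M) i i' = M (qidx pi i) i'.
Proof.
rewrite mxE (bigD1 (qidx pi i)) //= QpermE eqxx mul1r big1 ?addr0 //.
by move=> k /negbTE neq_k; rewrite QpermE neq_k mul0r.
Qed.

Lemma mul_mx_Qperm n (pi : 'S_n) (M : 'M[algC]_(2 ^ n)) i i' :
  (M *m Qperm pi) i i' = M i (qidx pi^-1 i').
Proof.
rewrite mxE (bigD1 (qidx pi^-1 i')) //= QpermE qidxKV eqxx mulr1 big1 ?addr0 //.
move=> k neq_k; rewrite QpermE; case: eqP => [eq_k|]; last by rewrite mulr0.
by rewrite eq_k qidxK eqxx in neq_k.
Qed.

Lemma Qperm_mul n (pi rho : 'S_n) : Qperm pi *m Qperm rho = Qperm (rho * pi).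
Proof. by apply/matrixP => i i'; rewrite mul_Qperm_mx !QpermE qidxM. Qed.

Lemma Qperm1 n : Qperm (1 : 'S_n) = 1%:M.
Proof. by apply/matrixP => i i'; rewrite QpermE qidx1 mxE eq_sym. Qed.

Lemma Qperm_tens n (pi : 'S_n) (C : 'I_n -> 'M[algC]_2) :
  Qperm pi *m tens C = tens (fun j => C ((pi^-1)%g j)) *m Qperm pi.
Proof.
apply/matrixP => i i'; rewrite mul_Qperm_mx mul_mx_Qperm !tensE.
rewrite [RHS](reindex_inj (@perm_inj _ pi)) /=; apply: eq_bigr => j _.
by rewrite permK !bits_qidx permK.
Qed.

Lemma adjE m (A : 'M[algC]_m) i j : adj A i j = (A j i)^*.
Proof. by rewrite !mxE. Qed.

Lemma adjM m (A B : 'M[algC]_m) : adj (A *m B) = adj B *m adj A.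
Proof. by rewrite /adj map_mxM trmx_mul. Qed.

Lemma adj1 m : adj (1%:M : 'M[algC]_m) = 1%:M.
Proof. by rewrite /adj map_mx1 trmx1. Qed.

Lemma adjK m : involutive (@adj m).
Proof. by move=> A; apply/matrixP => i j; rewrite !adjE conjCK. Qed.

Lemma adj_tens n (C : 'I_n -> 'M[algC]_2) :
  adj (tens C) = tens (fun j => adj (C j)).
Proof.
apply/matrixP => i i'; rewrite adjE !tensE rmorph_prod.
by apply: eq_bigr => j _; rewrite adjE.
Qed.

Lemma adj_Qperm n (pi : 'S_n) : adj (Qperm pi) = Qperm pi^-1.
Proof.
apply/matrixP => i i'; rewrite adjE !QpermE conjC_nat.
by congr (nat_of_bool _)%:R; apply/eqP/eqP => ->; rewrite ?qidxK ?qidxKV.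
Qed.

(** * Paulis *)

Lemma pauli1_0 : pauli1 0 = 1%:M.
Proof. by apply/matrixP => r s; rewrite !mxE /=; case: (r == s). Qed.

Lemma mxtrace_pauli1_mul (a b : 'I_4) :
  \tr (pauli1 a *m pauli1 b) = if a == b then 2 else 0.
Proof.
case: a => [[|[|[|[|//]]]] ?]; case: b => [[|[|[|[|//]]]] ?];
rewrite /mxtrace !big_ord_recr !big_ord0 /= !mxE !big_ord_recr !big_ord0 /= !mxE /=.
all: rewrite ?(mul0r, mulr0, mul1r, mulr1, add0r, addr0, mulNr, mulrN, opprK).
all: by rewrite -?expr2 ?sqrCi ?opprK ?addrN ?addNr.
Qed.

Lemma mxtrace_pmat_mul n (p q : upauli n) :
  \tr (pmat p *m pmat q) = if p == q then 2 ^+ n else 0.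
Proof.
rewrite /pmat tens_mul mxtrace_tens.
under eq_bigr => j _ do rewrite mxtrace_pauli1_mul.
have [<- | neq_pq] := eqVneq p q.
  by rewrite (eq_bigr (fun=> 2)) ?prodr_const ?card_ord // => j; rewrite eqxx.
have [j neq_j] : exists j, p j != q j.
  apply/existsP; apply: contraR neq_pq => /existsPn eq_pq.
  by apply/eqP/ffunP => j; apply/eqP; rewrite -[_ == _]negbK eq_pq.
by rewrite (bigD1 j) //= (negbTE neq_j) mul0r.
Qed.

Lemma expCi_inj (a b : 'I_4) : 'i ^+ a = 'i ^+ b :> algC -> a = b.
Proof.
have neq_N1_1 : (-1 : algC) != 1.
  by rewrite -subr_eq0 -opprD oppr_eq0 -(natrD _ 1 1) pnatr_eq0.
wlog le_ab : a b / (a <= b)%N.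
  by move=> W; case: (leqP a b) => [/W // | /ltnW/W le_ba /esym/le_ba].
move=> eq_ab; have eq1 : 'i ^+ (b - a) = 1 :> algC.
  by apply: (mulfI (expf_neq0 a (neq0Ci algC))); rewrite mulr1 -exprD subnKC.
apply: val_inj; have : (b - a < 4)%N by rewrite (leq_ltn_trans (leq_subr _ _)).
move: eq1; case def_d: (b - a)%N => [|[|[|[|d]]]] eq1 lt_d4 //.
- by apply/eqP; rewrite eqn_leq le_ab -subn_eq0 def_d.
- by rewrite expr1 in eq1; rewrite -sqrCi eq1 expr1n eqxx in neq_N1_1.
- by rewrite sqrCi in eq1; rewrite eq1 eqxx in neq_N1_1.
- move/eqP: eq1; rewrite exprS sqrCi mulrN1 eqr_oppLR => /eqP eq_i.
  by rewrite -sqrCi eq_i sqrrN expr1n eqxx in neq_N1_1.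
Qed.

(* Paulis are orthogonal for the trace form, which identifies both the phase and the Pauli. *)
Lemma smat_inj n : injective (@smat n).
Proof.
move=> [a p] [b q]; rewrite /smat /= => /(congr1 (fun M => \tr (M *m pmat p))).
rewrite -!scalemxAl !mxtraceZ !mxtrace_pmat_mul eqxx.
have neq0_2n : (2 ^+ n : algC) != 0 by rewrite expf_neq0 // pnatr_eq0.
have [<- /(mulIf neq0_2n)/expCi_inj -> // | _] := eqVneq q p.
by move/eqP; rewrite mulr0 mulf_eq0 expf_eq0 (negbTE neq0_2n) (negbTE (neq0Ci _)) andbF.
Qed.

Lemma smat_phase n (c : 'I_4) : smat (c, [ffun=> 0] : upauli n) = 'i ^+ c *: 1%:M.
Proof.
rewrite /smat /pmat (_ : (fun j => _) = fun _ => 1%:M) ?tens_scalar1 //.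
by apply: funext => j; rewrite ffunE pauli1_0.
Qed.

Lemma expCi_mod4 m : 'i ^+ (m %% 4) = 'i ^+ m :> algC.
Proof.
have expCi4 : 'i ^+ 4 = 1 :> algC by rewrite (exprM _ 2 2) sqrCi sqrrN expr1n.
by rewrite {2}(divn_eq m 4) exprD mulnC exprM expCi4 expr1n mul1r.
Qed.

Lemma smat_scale n (a : nat) (t : spauli n) :
  'i ^+ a *: smat t = smat (inord ((a + t.1) %% 4), t.2).
Proof. by rewrite /smat scalerA -exprD inordK ?ltn_pmod // expCi_mod4. Qed.

(** * Clifford conjugation *)

Lemma unitaryV m (U : 'M[algC]_m) : unitary U -> adj U *m U = 1%:M.
Proof. exact: mulmx1C. Qed.

Lemma unitary_conj_inj m (U A B : 'M[algC]_m) : unitary U ->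
  U *m A *m adj U = U *m B *m adj U -> A = B.
Proof.
move=> uU eq_conj.
have conjK X : adj U *m (U *m X *m adj U) *m U = X.
  by rewrite !mulmxA (unitaryV uU) mul1mx -mulmxA (unitaryV uU) mulmx1.
by rewrite -(conjK A) eq_conj conjK.
Qed.

Section CliffordConjugation.
Variables (n : nat) (U : 'M[algC]_(2 ^ n)).
Hypothesis cliffU : is_clifford U.

Lemma conj_spP s : smat (conj_sp U s) = U *m smat s *m adj U.
Proof.
rewrite /conj_sp; case: pickP => [t /eqP -> // | no_t].
by have [t def_t] := cliffU.2 s; move: (no_t t); rewrite def_t eqxx.
Qed.

Lemma conj_sp_inj : injective (conj_sp U).
Proof.
move=> s1 s2 /(congr1 (@smat n)); rewrite !conj_spP.
by move/(unitary_conj_inj cliffU.1)/smat_inj.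
Qed.

Lemma conj_sp_surj s : exists s0, conj_sp U s0 = s.
Proof. by have [g _ gK] := injF_bij conj_sp_inj; exists (g s); rewrite gK. Qed.

Lemma conj_sp_phase (c : 'I_4) : conj_sp U (c, [ffun=> 0]) = (c, [ffun=> 0]).
Proof.
apply: smat_inj; rewrite conj_spP smat_phase.
by rewrite -scalemxAr mulmx1 -scalemxAl cliffU.1.
Qed.

Lemma gprod_conj m (g : 'I_m -> spauli n) l :
  gprod (fun i => conj_sp U (g i)) l = U *m gprod g l *m adj U.
Proof.
elim: l => [|i l IHl] /=; first by rewrite mulmx1 cliffU.1.
by rewrite IHl conj_spP !mulmxA -(mulmxA _ (adj U) U) (unitaryV cliffU.1) mulmx1.
Qed.

Lemma in_gen_conj m (g : 'I_m -> spauli n) (S : {set spauli n}) :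
  (forall s, s \in S <-> in_gen g s) ->
  forall s, s \in conj_set U S <-> in_gen (fun i => conj_sp U (g i)) s.
Proof.
move=> genS s; split.
  by case/imsetP => s0 /genS [l def_s0] ->; exists l; rewrite gprod_conj conj_spP def_s0.
case=> l def_s; have [s0 eq_s] := conj_sp_surj s; subst s.
apply/imsetP; exists s0 => //; apply/genS; exists l.
by apply: (unitary_conj_inj cliffU.1); rewrite -conj_spP def_s gprod_conj.
Qed.

Lemma Stab_conj k (S : {set spauli n}) : Stab n k S -> Stab n k (conj_set U S).
Proof.
case=> le_kn [commS [notN1 [g [genS indep_g]]]]; split=> //; split.
  move=> _ _ /imsetP[s Ss ->] /imsetP[t St ->]; rewrite !conj_spP.
  rewrite !mulmxA -!(mulmxA _ (adj U) U) (unitaryV cliffU.1) !mulmx1.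
  by rewrite -!(mulmxA U) commS.
split.
  apply/imsetP => -[s Ss]; rewrite -[minusI n]conj_sp_phase => /conj_sp_inj eq_s.
  by move: notN1; rewrite /minusI eq_s Ss.
exists (fun i => conj_sp U (g i)); split; first exact: in_gen_conj.
move=> i [l [l_i]]; rewrite conj_spP gprod_conj => /(unitary_conj_inj cliffU.1) def_gi.
by apply: (indep_g i); exists l.
Qed.

End CliffordConjugation.

Lemma clifford_mul n (U V : 'M[algC]_(2 ^ n)) :
  is_clifford U -> is_clifford V -> is_clifford (U *m V).
Proof.
move=> cliffU cliffV; split.
  by rewrite /unitary adjM mulmxA -(mulmxA U) cliffV.1 mulmx1 cliffU.1.
by move=> s; exists (conj_sp U (conj_sp V s)); rewrite !conj_spP // adjM !mulmxA.
Qed.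

Lemma clifford_adj n (U : 'M[algC]_(2 ^ n)) : is_clifford U -> is_clifford (adj U).
Proof.
move=> cliffU; split; first by rewrite /unitary adjK (unitaryV cliffU.1).
move=> s; have [s0 <-] := conj_sp_surj cliffU s.
exists s0; rewrite conj_spP // adjK !mulmxA (unitaryV cliffU.1) mul1mx.
by rewrite -mulmxA (unitaryV cliffU.1) mulmx1.
Qed.

Lemma clifford1 n : is_clifford (1%:M : 'M[algC]_(2 ^ n)).
Proof.
split=> [|s]; first by rewrite /unitary adj1 mulmx1.
by exists s; rewrite adj1 mulmx1 mul1mx.
Qed.

Lemma conj_spM n (U V : 'M[algC]_(2 ^ n)) s :
  is_clifford U -> is_clifford V ->
  conj_sp (U *m V) s = conj_sp U (conj_sp V s).
Proof.
move=> cliffU cliffV; apply: smat_inj.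
by rewrite (conj_spP (clifford_mul cliffU cliffV)) !conj_spP // adjM !mulmxA.
Qed.

Lemma conj_sp1 n (s : spauli n) : conj_sp 1%:M s = s.
Proof. by apply: smat_inj; rewrite (conj_spP (clifford1 n)) adj1 mulmx1 mul1mx. Qed.

Lemma is_encoder_conj n k (S : {set spauli n}) (U Uenc : 'M[algC]_(2 ^ n)) :
  is_clifford U -> is_encoder k S Uenc -> is_encoder k (conj_set U S) (U *m Uenc).
Proof.
move=> cliffU [cliffE genS]; split; first exact: clifford_mul.
move=> s; rewrite (in_gen_conj cliffU genS).
suff -> : (fun i : 'I_(n - k) => conj_sp (U *m Uenc) (Zq n i))
    = (fun i => conj_sp U (conj_sp Uenc (Zq n i))) by [].
by apply: funext => i; rewrite conj_spM.
Qed.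

(** * Local Cliffords and qubit permutations *)

Lemma smat_ord1 (s : spauli 1) : smat s = 'i ^+ s.1 *: pauli1 (s.2 ord0).
Proof. by rewrite /smat /pmat tens_ord1. Qed.

Section SingleQubitClifford.
Variables (C : 'M[algC]_(2 ^ 1)) (a : 'I_4).
Hypothesis cliffC : is_clifford C.

Local Notation image := (conj_sp C (0, [ffun=> a])).

Lemma conj_pauli1 : C *m pauli1 a *m adj C = 'i ^+ image.1 *: pauli1 (image.2 ord0).
Proof. by rewrite -smat_ord1 conj_spP // smat_ord1 ffunE expr0 scale1r. Qed.

(* Conjugation fixes the phases and is injective, so only the identity is sent to a phase. *)
Lemma conj_pauli1_eq0 : (image.2 ord0 == 0) = (a == 0).
Proof.
apply/eqP/eqP => [image0 | ->]; last by rewrite (conj_sp_phase cliffC) ffunE.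
have : image = (image.1, [ffun=> 0]).
  by case: image image0 => c q /= q0; congr (_, _); apply/ffunP => j; rewrite ord1 ffunE.
rewrite -(conj_sp_phase cliffC) => /(conj_sp_inj cliffC) [_].
by move/ffunP/(_ ord0); rewrite !ffunE.
Qed.

End SingleQubitClifford.

Lemma local_perm_conj n (C : 'I_n -> 'M[algC]_2) (pi : 'S_n) (A : 'I_n -> 'M[algC]_2) :
  (tens C *m Qperm pi) *m tens A *m adj (tens C *m Qperm pi)
  = tens (fun j => C j *m A ((pi^-1)%g j) *m adj (C j)).
Proof.
rewrite adjM adj_Qperm adj_tens -!mulmxA (mulmxA (Qperm pi)) Qperm_tens.
rewrite -!mulmxA (mulmxA (Qperm pi)) Qperm_mul mulVg Qperm1 mul1mx.
by rewrite !tens_mul; congr tens; apply: funext => j; rewrite mulmxA.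
Qed.

Lemma local_perm_conj_pmat n (C : 'I_n -> 'M[algC]_(2 ^ 1)) (pi : 'S_n) (p : upauli n) :
  (forall j, is_clifford (C j)) ->
  exists2 t : spauli n,
    smat t = (tens C *m Qperm pi) *m pmat p *m adj (tens C *m Qperm pi)
    & weight t.2 = weight p.
Proof.
move=> cliffC; pose t j := conj_sp (C j) (0, [ffun=> p ((pi^-1)%g j)]).
exists (inord ((\sum_j ((t j).1 : nat)) %% 4), [ffun j => (t j).2 ord0]).
  rewrite local_perm_conj.
  rewrite (_ : (fun j => _) = fun j => 'i ^+ (t j).1 *: pauli1 ((t j).2 ord0)).
    rewrite tensZ prodrXr /smat /= inordK ?ltn_pmod // expCi_mod4.
    by congr (_ *: tens _); apply: funext => j; rewrite ffunE.
  by apply: funext => j; rewrite conj_pauli1.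
rewrite /weight /= (_ : [set j | _] = pi @: [set j | p j != 0]).
  by rewrite card_imset //; exact: perm_inj.
apply/setP => j; rewrite inE ffunE conj_pauli1_eq0 //.
apply/idP/imsetP => [nz_j | [j' nz_j' ->]].
  by exists ((pi^-1)%g j); rewrite ?inE // permKV.
by rewrite permK; rewrite inE in nz_j'.
Qed.

Lemma is_PLC_clifford n (U : 'M[algC]_(2 ^ n)) : is_PLC U -> is_clifford U.
Proof.
case=> C [pi [cliffC ->]]; split.
  have := local_perm_conj C pi (fun _ => 1%:M).
  rewrite tens_scalar1 mulmx1 /unitary => ->.
  rewrite -[RHS](tens_scalar1 n); congr tens; apply: funext => j.
  by rewrite mulmx1 (cliffC _).1.
case=> c p; have [t def_t _] := local_perm_conj_pmat pi p cliffC.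
exists (inord ((c + t.1) %% 4), t.2).
by rewrite -smat_scale def_t /smat /= -scalemxAr -scalemxAl.
Qed.

Lemma is_PLC_weight n (U : 'M[algC]_(2 ^ n)) (p : upauli n) : is_PLC U ->
  weight (conj_sp U (0, p)).2 = weight p.
Proof.
move=> plcU; have cliffU := is_PLC_clifford plcU.
case: plcU => C [pi [cliffC def_U]].
have [t def_t <-] := local_perm_conj_pmat pi p cliffC.
suff -> : conj_sp U (0, p) = t by [].
by apply: smat_inj; rewrite conj_spP // def_t -def_U /smat /= expr0 scale1r.
Qed.

Lemma is_PLC_mul n (U V : 'M[algC]_(2 ^ n)) : is_PLC U -> is_PLC V -> is_PLC (U *m V).
Proof.
case=> C [pi [cliffC ->]] [D [rho [cliffD ->]]].
exists (fun j => C j *m D ((pi^-1)%g j)), (rho * pi)%g; split.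
  by move=> j; apply: clifford_mul.
by rewrite -!mulmxA (mulmxA (Qperm pi)) Qperm_tens -!mulmxA Qperm_mul !mulmxA tens_mul.
Qed.

Lemma is_PLC_adj n (U : 'M[algC]_(2 ^ n)) : is_PLC U -> is_PLC (adj U).
Proof.
case=> C [pi [cliffC ->]]; exists (fun j => adj (C (pi j))), (pi^-1)%g; split.
  by move=> j; apply: clifford_adj.
by rewrite adjM adj_Qperm adj_tens Qperm_tens invgK.
Qed.

Lemma is_PLC1 n : is_PLC (1%:M : 'M[algC]_(2 ^ n)).
Proof.
exists (fun _ => 1%:M), 1%g; split; first by move=> j; apply: clifford1.
by rewrite Qperm1 mulmx1 tens_scalar1.
Qed.

Lemma in_PLC n (f : {ffun spauli n -> spauli n}) :
  f \in PLC n <-> exists U, is_PLC U /\ cact U = f.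
Proof. by rewrite inE; split=> [/asboolP | ?]; last apply/asboolP. Qed.

Lemma PLC_comp n :
  {in PLC n &, forall f g : {ffun spauli n -> spauli n}, [ffun s => f (g s)] \in PLC n}.
Proof.
move=> f g /in_PLC[U [plcU <-]] /in_PLC[V [plcV <-]]; apply/in_PLC.
exists (U *m V); split; first exact: is_PLC_mul.
by apply/ffunP => s; rewrite !ffunE conj_spM //; apply: is_PLC_clifford.
Qed.

Lemma PLC_id n : [ffun s => s] \in PLC n.
Proof.
apply/in_PLC; exists 1%:M; split; first exact: is_PLC1.
by apply/ffunP => s; rewrite !ffunE conj_sp1.
Qed.

Lemma PLC_inv n :
  {in PLC n, forall f : {ffun spauli n -> spauli n},
    exists2 g, g \in PLC n & cancel f g /\ cancel g f}.
Proof.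
move=> f /in_PLC[U [plcU <-]]; have cliffU := is_PLC_clifford plcU.
exists (cact (adj U)); first by apply/in_PLC; exists (adj U); split => //; apply: is_PLC_adj.
have cliffU' := clifford_adj cliffU.
split=> s; rewrite !ffunE.
  by rewrite -(conj_spM _ cliffU' cliffU) (unitaryV cliffU.1) conj_sp1.
by rewrite -(conj_spM _ cliffU cliffU') cliffU.1 conj_sp1.
Qed.

Lemma PLC_weight n (f : {ffun spauli n -> spauli n}) (E : upauli n) :
  f \in PLC n -> weight (f (0, E)).2 = weight E.
Proof. by move=> /in_PLC[U [plcU <-]]; rewrite ffunE is_PLC_weight. Qed.

(** * Counting, orbits and total variation *)

Section Counting.
Local Open Scope nat_scope.

Lemma card_upauli_support n (A : {set 'I_n}) :
  #|[set p : upauli n | [set j | p j != 0%R] == A]| <= 3 ^ #|A|.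
Proof.
have card_nz : #|predC1 (0%R : 'I_4)| = 3 by rewrite cardC1 card_ord.
apply: (@leq_trans #|pffun_on (0%R : 'I_4) A (predC1 0%R)|).
  2: by rewrite card_pffun_on card_nz.
apply: subset_leq_card; apply/subsetP => p; rewrite inE => /eqP suppA.
apply/pffun_onP; split; first by apply/subsetP => j; rewrite -suppA !inE.
by move=> _ /imageP[j Aj ->]; rewrite -suppA inE in Aj; rewrite !inE.
Qed.

Lemma card_upauli_weight_bin n w :
  #|[set p : upauli n | weight p == w]| <= 'C(n, w) * 3 ^ w.
Proof.
rewrite -[in 'C(n, w)](card_ord n) -card_draws -sum_nat_const -sum1_card.
rewrite (partition_big (fun p : upauli n => [set j | p j != 0%R])
                       (mem [set A : {set 'I_n} | #|A| == w])) => [|p]; last by rewrite !inE.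
apply: leq_sum => A /[!inE] /eqP <-; apply: leq_trans (card_upauli_support A).
rewrite -[#|[set p : upauli n | _ == A]|]sum1_card; apply/eq_leq/eq_bigl => p.
by rewrite !inE andb_idl // => /eqP <-.
Qed.

Lemma ffact_leq_expn n w : n ^_ w <= n ^ w.
Proof.
apply: (@leq_trans (\prod_(i < w) n)); last by rewrite prod_nat_const card_ord.
by rewrite ffact_prod; apply: leq_prod => i _; exact: leq_subr.
Qed.

Lemma expn3_leq_fact w : 3 ^ w <= 6 * w`!.
Proof.
elim: w => [// | w IHw]; have [le_w2 | lt2w] := leqP w 2.
  by case: w le_w2 {IHw} => [|[|[|]]].
by rewrite expnS factS mulnCA leq_mul // ltnW.
Qed.

Lemma card_upauli_weight n w : #|[set p : upauli n | weight p == w]| <= 6 * n ^ w.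
Proof.
rewrite -(@leq_pmul2r w`!) ?fact_gt0 //.
apply: leq_trans (leq_mul (card_upauli_weight_bin n w) (leqnn w`!)) _.
rewrite mulnAC bin_ffact [X in _ <= X]mulnAC [X in _ <= X]mulnC.
by rewrite leq_mul ?ffact_leq_expn ?expn3_leq_fact.
Qed.

End Counting.

Section OrbitFibers.
Variables (T : finType) (G : {set {ffun T -> T}}) (S : {set T}).
Hypothesis G_comp : {in G &, forall f g : {ffun T -> T}, [ffun s => f (g s)] \in G}.
Hypothesis G_inv :
  {in G, forall f : {ffun T -> T}, exists2 g, g \in G & cancel f g /\ cancel g f}.

Definition set_orbit := [set f @: S | f : {ffun T -> T} in G].
Definition orbit_fiber (A : {set T}) := [set f in G | f @: S == A].

Lemma leq_card_orbit_fiber (f g : {ffun T -> T}) A : f \in G -> cancel f g ->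
  (#|orbit_fiber A| <= #|orbit_fiber (f @: A)|)%N.
Proof.
move=> Gf fK.
rewrite -(@card_in_imset _ _ (fun h : {ffun T -> T} => [ffun s => f (h s)])).
  apply/subset_leq_card/subsetP => _ /imsetP[h /setIdP[Gh /eqP hS] ->].
  rewrite inE G_comp //= -hS -imset_comp; apply/eqP/eq_imset => s.
  by rewrite ffunE.
move=> h1 h2 _ _ /ffunP eq_fh; apply/ffunP => s.
by have := eq_fh s; rewrite !ffunE => /(congr1 g); rewrite !fK.
Qed.

Lemma card_orbit_fiber A : A \in set_orbit -> #|orbit_fiber A| = #|orbit_fiber S|.
Proof.
case/imsetP => f Gf ->; have [g Gg [fK gK]] := G_inv Gf.
have gfS : g @: (f @: S) = S by rewrite -imset_comp (eq_imset _ fK) imset_id.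
apply/eqP; rewrite eqn_leq (leq_card_orbit_fiber S Gf fK) andbT.
by have := leq_card_orbit_fiber (f @: S) Gg gK; rewrite gfS.
Qed.

Lemma card_orbit_fibers : #|G| = (#|set_orbit| * #|orbit_fiber S|)%N.
Proof.
rewrite -sum1_card (partition_big (fun f : {ffun T -> T} => f @: S) (mem set_orbit)).
  rewrite -sum_nat_const; apply: eq_bigr => A orbA.
  by rewrite -(card_orbit_fiber orbA) -sum1_card; apply: eq_bigl => f; rewrite inE.
by move=> f Gf; exact: imset_f.
Qed.

End OrbitFibers.

Lemma min_sum_le_sum_min (R : realDomainType) (I : finType) (x : I -> R) (c : R) :
  (forall i, 0 <= x i) -> 0 <= c ->
  Num.min (\sum_i x i) c <= \sum_i Num.min (x i) c.
Proof.
move=> x_ge0 c_ge0; have [i le_c_xi | lt_x_c] := pickP (fun i => c <= x i).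
  apply: (@le_trans _ _ c); first by rewrite ge_min lexx orbT.
  rewrite (bigD1 i) //= (min_r le_c_xi) lerDl sumr_ge0 // => j _.
  by rewrite le_min x_ge0.
rewrite [X in _ <= X](eq_bigr x) ?ge_min ?lexx // => i _.
by rewrite min_l // ltW // ltNge lt_x_c.
Qed.

Section TotalVariation.
Variable R : realType.

Lemma tv_dist_minE (T : finType) (p q : T -> R) :
  \sum_z p z = 1 -> \sum_z q z = 1 ->
  tv_dist p q = 1 - \sum_z Num.min (p z) (q z).
Proof.
move=> sum_p sum_q; rewrite /tv_dist.
rewrite (eq_bigr (fun z => p z + q z - 2 * Num.min (p z) (q z))) => [|z _]; last first.
  by rewrite minr_absE; lra.
rewrite sumrB big_split /= sum_p sum_q -mulr_sumr; lra.
Qed.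

(* For each [y], [q] puts mass [qY y / #|A|] on every [(x, y)] with [x] in [A], while
   [p (., y)] has total mass [qY y] inside [A]: the overlap is at least [1 / #|A|]. *)
Lemma tv_dist_uniform_product (X Y : finType) (p q : X * Y -> R)
    (A : {set X}) (qY : Y -> R) :
  (0 < #|A|)%N -> (forall z, 0 <= p z) ->
  (forall x y, x \notin A -> p (x, y) = 0) ->
  (forall y, \sum_x p (x, y) = qY y) -> \sum_y qY y = 1 ->
  (forall x y, q (x, y) = (x \in A)%:R / #|A|%:R * qY y) ->
  tv_dist p q <= 1 - #|A|%:R^-1.
Proof.
move=> A_gt0 p_ge0 p_supp p_marg sum_qY def_q.
have A_neq0 : (#|A|%:R : R) != 0 by rewrite pnatr_eq0 -lt0n.
have qY_ge0 y : 0 <= qY y by rewrite -p_marg sumr_ge0.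
have sum_pair (F : X * Y -> R) : \sum_z F z = \sum_y \sum_x F (x, y).
  by rewrite exchange_big pair_bigA; apply: eq_bigr => -[].
have sum_p : \sum_z p z = 1 by rewrite sum_pair (eq_bigr _ (fun y _ => p_marg y)).
have sum_q : \sum_z q z = 1.
  rewrite sum_pair -sum_qY; apply: eq_bigr => y _.
  under eq_bigr do rewrite def_q; rewrite -mulr_suml -mulr_suml.
  rewrite (eq_bigr (fun x => if x \in A then 1 else 0)) => [|x _]; last by case: (x \in A).
  by rewrite -big_mkcond sumr_const mulfV // mul1r.
rewrite tv_dist_minE // lerD2l lerN2 sum_pair.
have -> : #|A|%:R^-1 = \sum_y qY y / #|A|%:R by rewrite -mulr_suml sum_qY mul1r.
apply: ler_sum => y _.
have qA_ge0 : 0 <= qY y / #|A|%:R by rewrite divr_ge0.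
have -> : \sum_x Num.min (p (x, y)) (q (x, y))
         = \sum_x Num.min (p (x, y)) (qY y / #|A|%:R).
  apply: eq_bigr => x _; rewrite def_q.
  have [_ | /p_supp ->] := boolP (x \in A); first by rewrite /= mulr1n mul1r mulrC.
  by rewrite !mul0r !min_l.
apply: le_trans (min_sum_le_sum_min (fun x => p_ge0 (x, y)) qA_ge0).
by rewrite p_marg le_min lexx andbT ler_piMr // invf_le1 ?ltr0n // ler1n.
Qed.

End TotalVariation.

Lemma imset_ffun_id (T : finType) (A : {set T}) : [ffun x => x] @: A = A.
Proof. by rewrite -[RHS]imset_id; apply: eq_imset => x; rewrite ffunE. Qed.

Section JointLaw.
Variables (R : realType) (n : nat) (S : {set spauli n}) (E : upauli n).

Local Notation orbit := (set_orbit (PLC n) S).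
Local Notation fiber := (orbit_fiber (PLC n) S).

Lemma card_fiber_gt0 : (0 < #|fiber S|)%N.
Proof. by apply/card_gt0P; exists [ffun s => s]; rewrite inE PLC_id imset_ffun_id /=. Qed.

Lemma card_orbit_gt0 : (0 < #|orbit|)%N.
Proof.
apply/card_gt0P; exists S; apply/imsetP.
by exists [ffun s => s]; rewrite ?PLC_id ?imset_ffun_id.
Qed.

Lemma joint_law_ge0 z : 0 <= joint_law R S E z.
Proof. by rewrite divr_ge0. Qed.

Lemma joint_law_weight e A : weight e != weight E -> joint_law R S E (e, A) = 0.
Proof.
move=> neq_w; rewrite /joint_law (_ : [set f in _ | _] = set0) ?cards0 ?mul0r //.
apply/setP => f; rewrite in_set0 inE; apply/negbTE/andP => -[PLCf /eqP[def_e _]].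
by rewrite -def_e PLC_weight ?eqxx in neq_w.
Qed.

Lemma joint_law_marginal A : \sum_e joint_law R S E (e, A) = unif_orbit R S A.
Proof.
rewrite /joint_law -mulr_suml -natr_sum.
have -> : (\sum_e #|[set f in PLC n | ((f (0%R, E)).2, f @: S) == (e, A)]|)%N
         = #|fiber A|.
  rewrite -[#|fiber A|]sum1_card.
  rewrite (partition_big (fun f : {ffun spauli n -> spauli n} => (f (0%R, E)).2) predT) //=.
  apply: eq_bigr => e _; rewrite -sum1_card; apply: eq_bigl => f.
  by rewrite !inE xpair_eqE andbA [RHS]andbAC.
rewrite /unif_orbit; case: ifPn => [orbA | norbA].
  rewrite (card_orbit_fiber (@PLC_comp n) (@PLC_inv n) orbA).
  rewrite (card_orbit_fibers S (@PLC_comp n) (@PLC_inv n)) natrM invfM mulrCA.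
  rewrite mulfV ?div1r ?mulr1 //.
  by rewrite pnatr_eq0 -lt0n card_fiber_gt0.
rewrite (_ : fiber A = set0) ?cards0 ?mul0r //; apply/setP => f; rewrite in_set0.
by apply/negbTE; apply: contra norbA => /setIdP[PLCf /eqP <-]; apply/imsetP; exists f.
Qed.

Lemma sum_unif_orbit : \sum_A unif_orbit R S A = 1.
Proof.
rewrite /unif_orbit -big_mkcond /= sumr_const div1r.
rewrite -(mulr_natr (#|code_orbit S|%:R)^-1) mulVf //.
by rewrite pnatr_eq0 -lt0n card_orbit_gt0.
Qed.

Lemma tv_joint_product_le :
  tv_joint_product R (weight E) S E
    <= 1 - #|[set p : upauli n | weight p == weight E]|%:R^-1.
Proof.
apply: (tv_dist_uniform_product (qY := unif_orbit R S)).
- by apply/card_gt0P; exists E; rewrite inE.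
- exact: joint_law_ge0.
- by move=> e A; rewrite inE; exact: joint_law_weight.
- exact: joint_law_marginal.
- exact: sum_unif_orbit.
by move=> e A; rewrite /unif_w inE; case: eqP; rewrite ?mulr1n ?mul0r.
Qed.

End JointLaw.

Lemma inv_card_upauli_weight_ge (R : realType) n (E : upauli n) (W : R) :
  (0 < n)%N -> (weight E)%:R <= W ->
  (6 * n%:R `^ W)^-1 <= #|[set p : upauli n | weight p == weight E]|%:R^-1.
Proof.
move=> n_gt0 le_wW; have n_ge1 : (1 : R) <= n%:R by rewrite ler1n.
have card_gt0 : (0 < #|[set p : upauli n | weight p == weight E]|)%N.
  by apply/card_gt0P; exists E; rewrite inE.
have le_card :
    (#|[set p : upauli n | weight p == weight E]|%:R : R) <= 6 * n%:R `^ W.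
  apply: le_trans (_ : 6 * n%:R ^+ weight E <= _).
    by rewrite -natrX -natrM ler_nat card_upauli_weight.
  by rewrite ler_pM2l ?ltr0n // -powR_mulrn ?ler0n // ler_powR.
by rewrite lef_pV2 ?posrE ?ltr0n // (lt_le_trans _ le_card) ?ltr0n.
Qed.

Theorem mainTheorem10 (R : realType) :
  (forall (n k : nat) (S : {set spauli n}) (E : upauli n)
          (x : {ffun 'I_k -> bool}) (Uenc U : 'M[algC]_(2 ^ n)),
      Stab n k S -> is_encoder k S Uenc -> is_clifford U ->
      U *m (pmat E *m enc_state Uenc x)
        = (U *m pmat E *m adj U) *m (U *m enc_state Uenc x)
      /\ U *m pmat E *m adj U = smat (conj_sp U (0, E))
      /\ Stab n k (conj_set U S)
      /\ is_encoder k (conj_set U S) (U *m Uenc)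
      /\ U *m enc_state Uenc x = enc_state (U *m Uenc) x)
  /\
  (forall (c : nat) (A : R), (0 < c)%N -> 0 < A ->
    exists B : R, 0 < B /\
      forall (n k : nat) (S : {set spauli n}) (E : upauli n),
        (0 < n)%N -> Stab n k S ->
        (weight E)%:R <= A * (ln (n%:R : R)) ^+ c ->
        tv_joint_product R (weight E) S E
          <= 1 - 1 / (B * (n%:R `^ (A * (ln (n%:R : R)) ^+ c)))).
Proof.
split=> [n k S E x Uenc U stabS encS cliffU | c A _ _].
  split; first by rewrite !mulmxA -(mulmxA _ (adj U) U) (unitaryV cliffU.1) mulmx1.
  split; first by rewrite conj_spP // /smat expr0 scale1r.
  split; first exact: Stab_conj.
  split; first exact: is_encoder_conj.
  by rewrite /enc_state mulmxA.
exists 6; split=> // n k S E n_gt0 _ le_w.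
apply: le_trans (tv_joint_product_le R S E) _.
by rewrite div1r lerD2l lerN2 inv_card_upauli_weight_ge.
Qed.
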